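(* Let $c>1/2$ and let $0<c_1<1<c_2$ be the two roots of $v\mapsto\phi(v)-c$, where $\phi(v)=\frac{v^2}{2}-\log v$. Then $$T_{c,2}\ge2\sqrt2\Big[\sqrt{\tfrac{c_1}{1+c_1}}+\sqrt{\tfrac{c_2}{1+c_2}}\Big].$$
   Context: Consider on $\{(u,v)\in\mathbb{R}^2:v>0\}$ the ODE $\dot u=v-\frac1v$, $\dot v=-u$. The function $H(u,v)=\frac12u^2+\phi(v)$, $\phi(v)=\frac{v^2}2-\log v$, is a first integral with minimum $1/2$ at $(0,1)$; for $c>1/2$ the level set $\{H=c,\ v>0\}$ is a closed curve carrying a periodic solution, and $T_{c,2}$ denotes its (minimal) period, equivalently $T_{c,2}=\sqrt2\int_{c_1}^{c_2}\frac{dv}{\sqrt{c-\phi(v)}}$. *)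

From Stdlib Require Import Reals Lra.
Open Scope R_scope.

Definition phi (v : R) : R := v ^ 2 / 2 - ln v.

Definition improper_integral (f : R -> R) (a b I : R) : Prop :=
  forall eps : R, eps > 0 ->
    exists delta : R, delta > 0 /\
      forall a' b' : R, a < a' < a + delta -> b - delta < b' < b -> a' < b' ->
        exists pr : Riemann_integrable f a' b', Rabs (RiemannInt pr - I) < eps.

(* T_{c,2} = sqrt 2 * \int_{c1}^{c2} dv / sqrt(c - phi v)  (improper integral) *)
Definition period_integrand (c : R) (v : R) : R := / sqrt (c - phi v).

(** The level curve of the convex function [phi] lies below its tangent lines
    at the two roots: since [phi r = c] and [phi' r = r - /r], we get
    [c - phi v <= (/r - r) (v - r)].  Hence the integrand [/ sqrt (c - phi v)]
    dominates [/ sqrt ((/r - r) (v - r))], whose primitive is explicit; using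
    the tangent at [c1] on [(c1, 1]] and the tangent at [c2] on [[1, c2)] gives
    [2 sqrt (c1 / (1 + c1)) + 2 sqrt (c2 / (1 + c2))] up to an error
    [O(sqrt t)] for the integral truncated at distance [t] from the ends. *)

From Stdlib Require Import Reals Lra Psatz.
From Coquelicot Require Import Coquelicot.
Open Scope R_scope.

Lemma ln_le_sub_1 (x : R) : 0 < x -> ln x <= x - 1.
Proof.
  intros Hx. rewrite <- (ln_exp (x - 1)).
  apply ln_le; [exact Hx|]. generalize (exp_ineq1_le (x - 1)); lra.
Qed.

Lemma phi_ge_tangent (x y : R) : 0 < x -> 0 < y ->
  phi y >= phi x + (x - / x) * (y - x) + (y - x) ^ 2 / 2.
Proof.
  intros Hx Hy. unfold phi.
  assert (Hln : ln (y / x) <= y / x - 1)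
    by (apply ln_le_sub_1; apply Rdiv_lt_0_compat; lra).
  rewrite ln_div in Hln by lra.
  replace (y / x - 1) with ((y - x) * / x) in Hln by (field; lra).
  assert (x * / x = 1) by (field; lra).
  nra.
Qed.

Lemma c_sub_phi_le_tangent (c r v : R) : 0 < r -> 0 < v -> phi r = c ->
  c - phi v <= (/ r - r) * (v - r).
Proof.
  intros Hr Hv Hphi. generalize (phi_ge_tangent r v Hr Hv), (pow2_ge_0 (v - r)).
  rewrite Hphi. lra.
Qed.

Lemma phi_lt_between_roots (c c1 c2 v : R) : 0 < c1 -> c1 < v < c2 ->
  phi c1 = c -> phi c2 = c -> phi v < c.
Proof.
  intros Hc1 Hv E1 E2.
  generalize (phi_ge_tangent v c1 ltac:(lra) Hc1), (phi_ge_tangent v c2 ltac:(lra) ltac:(lra)).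
  rewrite E1, E2. set (d := v - / v). intros T1 T2.
  (* weighting the two tangent inequalities by [c2 - v] and [v - c1] eliminates the slope [d] *)
  assert (W1 : 0 <= (c2 - v) * (c - phi v - d * (c1 - v) - (c1 - v) ^ 2 / 2))
    by (apply Rmult_le_pos; lra).
  assert (W2 : 0 <= (v - c1) * (c - phi v - d * (c2 - v) - (c2 - v) ^ 2 / 2))
    by (apply Rmult_le_pos; lra).
  assert (0 < (c2 - v) * (v - c1)) by nra.
  nra.
Qed.

(** The primitive of [/ sqrt ((/r - r) (v - r))], for either sign of [/r - r]. *)
Definition tangent_primitive (r v : R) : R :=
  2 * sqrt ((/ r - r) * (v - r)) / (/ r - r).

Lemma is_RInt_tangent_primitive (r a b : R) : /r - r <> 0 -> a <= b ->
  (forall v, a <= v <= b -> 0 < (/ r - r) * (v - r)) ->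
  is_RInt (fun v => / sqrt ((/ r - r) * (v - r))) a b
    (tangent_primitive r b - tangent_primitive r a).
Proof.
  intros Hk Hab Hpos. unfold tangent_primitive.
  apply (is_RInt_derive (fun v => 2 * sqrt ((/ r - r) * (v - r)) / (/ r - r))).
  - intros v Hv. rewrite Rmin_left, Rmax_right in Hv by lra.
    specialize (Hpos v Hv).
    assert (0 < sqrt ((/ r - r) * (v - r))) by (apply sqrt_lt_R0; exact Hpos).
    auto_derive; replace (v + - r) with (v - r) by ring; [lra|].
    set (k := / r - r) in *. field. lra.
  - intros v Hv. rewrite Rmin_left, Rmax_right in Hv by lra.
    specialize (Hpos v Hv).
    apply (ex_derive_continuous (V := R_NormedModule)).
    assert (0 < sqrt ((/ r - r) * (v - r))) by (apply sqrt_lt_R0; exact Hpos).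
    auto_derive. replace (v + - r) with (v - r) by ring. repeat split; lra.
Qed.

Lemma sqrt_tangent_gap_at_1 (r : R) : 0 < r ->
  sqrt ((/ r - r) * (1 - r)) = Rabs (/ r - r) * sqrt (r / (1 + r)).
Proof.
  intros Hr.
  rewrite <- sqrt_Rsqr_abs, <- sqrt_mult by (try apply Rle_0_sqr; apply Rlt_le, Rdiv_lt_0_compat; lra).
  f_equal. unfold Rsqr. field. lra.
Qed.

Lemma Rabs_tangent_primitive (r v : R) : /r - r <> 0 -> 0 <= (/ r - r) * (v - r) ->
  Rabs (tangent_primitive r v) = 2 * sqrt (Rabs (v - r)) / sqrt (Rabs (/ r - r)).
Proof.
  intros Hk Hpos. unfold tangent_primitive.
  assert (Hk' : 0 < Rabs (/ r - r)) by (apply Rabs_pos_lt; exact Hk).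
  assert (Hs : 0 < sqrt (Rabs (/ r - r))) by (apply sqrt_lt_R0; exact Hk').
  replace ((/ r - r) * (v - r)) with (Rabs (/ r - r) * Rabs (v - r))
    by (rewrite <- Rabs_mult; apply Rabs_pos_eq; exact Hpos).
  rewrite sqrt_mult by apply Rabs_pos.
  rewrite Rabs_div by exact Hk.
  rewrite Rabs_pos_eq by (apply Rmult_le_pos; [lra | apply Rmult_le_pos; apply sqrt_pos]).
  assert (Esq := sqrt_sqrt (Rabs (/ r - r)) (Rabs_pos _)).
  set (s := sqrt (Rabs (/ r - r))) in *. rewrite <- Esq.
  field. lra.
Qed.

Lemma improper_integral_ge (f : R -> R) (a b I L C t0 : R) : a < b -> 0 < t0 ->
  improper_integral f a b I ->
  (forall t, 0 < t < t0 -> ex_RInt f (a + t) (b - t) ->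
     RInt f (a + t) (b - t) >= L - C * sqrt t) ->
  I >= L.
Proof.
  intros Hab Ht0 Himp Hbound. apply Rle_ge, Rle_plus_epsilon. intros e He.
  destruct (Himp (e / 2) ltac:(lra)) as [delta [Hdelta Happrox]].
  set (s := e / 2 / (Rabs C + 1)).
  assert (Hs : 0 < s) by (apply Rdiv_lt_0_compat; [lra | generalize (Rabs_pos C); lra]).
  set (m := Rmin (Rmin delta t0) (Rmin ((b - a) / 2) (s * s))).
  assert (Hm : 0 < m) by (unfold m; repeat apply Rmin_pos; nra).
  set (t := m / 2).
  assert (Ht : 0 < t) by (unfold t; lra).
  assert (Htd : t < delta /\ t < t0 /\ t < (b - a) / 2 /\ t <= s * s).
  { unfold t, m in *. generalize (Rmin_l delta t0), (Rmin_r delta t0),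
      (Rmin_l ((b - a) / 2) (s * s)), (Rmin_r ((b - a) / 2) (s * s)),
      (Rmin_l (Rmin delta t0) (Rmin ((b - a) / 2) (s * s))),
      (Rmin_r (Rmin delta t0) (Rmin ((b - a) / 2) (s * s))).
    lra. }
  destruct (Happrox (a + t) (b - t) ltac:(lra) ltac:(lra) ltac:(lra)) as [pr Hpr].
  specialize (Hbound t ltac:(lra) (ex_RInt_Reals_1 _ _ _ pr)).
  rewrite (RInt_Reals _ _ _ pr) in Hbound.
  assert (Hsqrt : sqrt t <= s)
    by (rewrite <- (sqrt_square s) by lra; apply sqrt_le_1_alt; lra).
  assert (Herr : C * sqrt t <= e / 2).
  { apply Rle_trans with (Rabs C * s).
    - apply Rle_trans with (Rabs C * sqrt t).
      + generalize (Rle_abs C), (sqrt_pos t). nra.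
      + apply Rmult_le_compat_l; [apply Rabs_pos | exact Hsqrt].
    - unfold s. assert (0 < Rabs C + 1) by (generalize (Rabs_pos C); lra).
      apply (Rmult_le_reg_r (Rabs C + 1)); [lra|].
      field_simplify; [|lra]. generalize (Rabs_pos C). nra. }
  apply Rabs_def2 in Hpr. lra.
Qed.

Section PeriodIntegral.

Variables c c1 c2 : R.
Hypotheses (Hc1 : 0 < c1) (Hc1_lt_1 : c1 < 1) (Hc2_gt_1 : 1 < c2).
Hypotheses (Ephi1 : phi c1 = c) (Ephi2 : phi c2 = c).

Lemma RInt_period_integrand_ge (r a b : R) : 0 < r -> phi r = c -> /r - r <> 0 ->
  c1 < a -> a <= b -> b < c2 ->
  (forall v, a <= v <= b -> 0 < (/ r - r) * (v - r)) ->
  ex_RInt (period_integrand c) a b ->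
  RInt (period_integrand c) a b >= tangent_primitive r b - tangent_primitive r a.
Proof.
  intros Hr Hphi Hk Ha Hab Hb Hpos Hex.
  assert (Hprim := is_RInt_tangent_primitive r a b Hk Hab Hpos).
  rewrite <- (is_RInt_unique _ _ _ _ Hprim).
  apply Rle_ge, RInt_le; [exact Hab | eexists; exact Hprim | exact Hex |].
  intros v Hv. unfold period_integrand. apply Rinv_le_contravar.
  - apply sqrt_lt_R0. generalize (phi_lt_between_roots c c1 c2 v Hc1 ltac:(lra) Ephi1 Ephi2). lra.
  - apply sqrt_le_1_alt, c_sub_phi_le_tangent; lra.
Qed.

Lemma RInt_period_integrand_truncated_ge (t : R) :
  0 < t < Rmin (1 - c1) (c2 - 1) ->
  ex_RInt (period_integrand c) (c1 + t) (c2 - t) ->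
  RInt (period_integrand c) (c1 + t) (c2 - t) >=
    2 * (sqrt (c1 / (1 + c1)) + sqrt (c2 / (1 + c2)))
    - (2 / sqrt (Rabs (/ c1 - c1)) + 2 / sqrt (Rabs (/ c2 - c2))) * sqrt t.
Proof.
  intros Ht Hex. generalize (Rmin_l (1 - c1) (c2 - 1)), (Rmin_r (1 - c1) (c2 - 1)). intros Hm1 Hm2.
  assert (Hk1 : 0 < / c1 - c1) by (assert (1 < / c1) by (rewrite <- Rinv_1; apply Rinv_lt_contravar; lra); lra).
  assert (Hk2 : / c2 - c2 < 0) by (assert (/ c2 < 1) by (rewrite <- Rinv_1; apply Rinv_lt_contravar; lra); lra).
  assert (Hex1 : ex_RInt (period_integrand c) (c1 + t) 1)
    by (apply (ex_RInt_Chasles_1 (V := R_CompleteNormedModule) _ _ _ (c2 - t)); [lra | exact Hex]).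
  assert (Hex2 : ex_RInt (period_integrand c) 1 (c2 - t))
    by (apply (ex_RInt_Chasles_2 (V := R_CompleteNormedModule) _ (c1 + t)); [lra | exact Hex]).
  rewrite <- (RInt_Chasles (V := R_CompleteNormedModule) _ _ 1 _ Hex1 Hex2).
  assert (Hleft := RInt_period_integrand_ge c1 (c1 + t) 1 Hc1 Ephi1 ltac:(lra)
    ltac:(lra) ltac:(lra) ltac:(lra) ltac:(intros; nra) Hex1).
  assert (Hright := RInt_period_integrand_ge c2 1 (c2 - t) ltac:(lra) Ephi2 ltac:(lra)
    ltac:(lra) ltac:(lra) ltac:(lra) ltac:(intros; nra) Hex2).
  assert (P1 : tangent_primitive c1 1 = 2 * sqrt (c1 / (1 + c1))).
  { unfold tangent_primitive. rewrite sqrt_tangent_gap_at_1, Rabs_pos_eq by lra.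
    set (k := / c1 - c1) in *. field. lra. }
  assert (P2 : tangent_primitive c2 1 = - (2 * sqrt (c2 / (1 + c2)))).
  { unfold tangent_primitive. rewrite sqrt_tangent_gap_at_1, Rabs_left by lra.
    set (k := / c2 - c2) in *. field. lra. }
  assert (E1 : Rabs (tangent_primitive c1 (c1 + t)) = 2 * sqrt t / sqrt (Rabs (/ c1 - c1))).
  { rewrite Rabs_tangent_primitive by nra. do 3 f_equal. rewrite Rabs_pos_eq; lra. }
  assert (E2 : Rabs (tangent_primitive c2 (c2 - t)) = 2 * sqrt t / sqrt (Rabs (/ c2 - c2))).
  { rewrite Rabs_tangent_primitive by nra. do 3 f_equal. rewrite Rabs_left; lra. }
  generalize (Rle_abs (tangent_primitive c1 (c1 + t))), (Rabs_maj2 (tangent_primitive c2 (c2 - t))).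
  rewrite E1, E2, P1, P2 in *. unfold plus; simpl. unfold Rdiv. lra.
Qed.

End PeriodIntegral.

Theorem lemmaA4 (c c1 c2 I : R) :
  c > 1/2 ->
  0 < c1 -> c1 < 1 -> 1 < c2 ->
  phi c1 = c -> phi c2 = c ->
  improper_integral (period_integrand c) c1 c2 I ->
  sqrt 2 * I >= 2 * sqrt 2 * (sqrt (c1 / (1 + c1)) + sqrt (c2 / (1 + c2))).
Proof.
  intros _ Hc1 Hc1_lt_1 Hc2_gt_1 E1 E2 Himp.
  assert (HI : I >= 2 * (sqrt (c1 / (1 + c1)) + sqrt (c2 / (1 + c2)))).
  { eapply (improper_integral_ge _ c1 c2 I) with (t0 := Rmin (1 - c1) (c2 - 1));
      [lra | apply Rmin_pos; lra | exact Himp |].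
    exact (RInt_period_integrand_truncated_ge c c1 c2 Hc1 Hc1_lt_1 Hc2_gt_1 E1 E2). }
  assert (0 < sqrt 2) by (apply sqrt_lt_R0; lra).
  nra.
Qed.
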